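(* Let $B$, $C$ be unital $\mathrm{C}^*$-algebras, let $\{\phi_i\}_{i=1}^m$, $\{\psi_j\}_{j=1}^n$ be families of surjective $*$-homomorphisms $B\to C$, and let $[c_{ij}]\in M_{m,n}(C)$ satisfy $\phi_i(b)c_{ij}=c_{ij}\psi_j(b)$ for all $b\in B$, $1\le i\le m$, $1\le j\le n$. (i) If $F_\pi\in M_n(C)$ is the permutation matrix of a permutation $\pi\in S_n$ (so that $[c_{ij}]F_\pi$ has $(i,j)$ entry $c_{i\pi(j)}$), then $[c_{ij}]F_\pi$ intertwines $\{\phi_i\}_{i=1}^m$ and $\{\psi_{\pi(j)}\}_{j=1}^n$, i.e. $\phi_i(b)c_{i\pi(j)}=c_{i\pi(j)}\psi_{\pi(j)}(b)$ for all $b,i,j$. (ii) If $c_{kk}$ is invertible, $h\ne k$, and $E_{hk}\in M_m(C)$ is the matrix of the elementary row operation that adds the $k$-th row multiplied on the left by $-c_{hk}c_{kk}^{-1}$ to the $h$-th row, then $E_{hk}[c_{ij}]=[c'_{ij}]$ again satisfies $\phi_i(b)c'_{ij}=c'_{ij}\psi_j(b)$ for all $b\in B$, $1\le i\le m$, $1\le j\le n$. *)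

From HB Require Import structures.
From mathcomp Require Import all_boot all_order all_algebra all_fingroup.
From mathcomp Require Import complex reals.
Set Implicit Arguments. Unset Strict Implicit. Unset Printing Implicit Defensive.
Import Order.TTheory GRing.Theory Num.Theory.
Local Open Scope ring_scope.

Definition unital_cstar_algebra (R : realType) (A : algType R[i])
    (star : A -> A) (nrm : A -> R) : Prop :=
  ((forall x, star (star x) = x) /\
   (forall x y, star (x + y) = star x + star y) /\
   (forall (a : R[i]) x, star (a *: x) = conjc a *: star x) /\
   (forall x y, star (x * y) = star y * star x)) /\
  ((forall x, 0 <= nrm x) /\ (forall x, nrm x = 0 -> x = 0) /\
   (forall x y, nrm (x + y) <= nrm x + nrm y) /\
   (forall (a : R[i]) x, nrm (a *: x) = ComplexField.Normc.normc a * nrm x) /\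
   (forall x y, nrm (x * y) <= nrm x * nrm y)) /\
  (forall x, nrm (star x * x) = nrm x ^+ 2) /\
  (forall u : nat -> A,
     (forall e : R, 0 < e -> exists N, forall p q, (N <= p)%N -> (N <= q)%N ->
        nrm (u p - u q) < e) ->
     exists l : A, forall e : R, 0 < e -> exists N, forall p, (N <= p)%N ->
        nrm (u p - l) < e).

Definition star_hom (R : realType) (A1 A2 : algType R[i])
    (star1 : A1 -> A1) (star2 : A2 -> A2) (f : A1 -> A2) : Prop :=
  [/\ (forall x y, f (x + y) = f x + f y),
      (forall (a : R[i]) x, f (a *: x) = a *: f x),
      (forall x y, f (x * y) = f x * f y) &
      (forall x, f (star1 x) = star2 (f x))].

Definition intertwines (R : realType) (B C : algType R[i]) (m n : nat)
    (phi : 'I_m -> B -> C) (psi : 'I_n -> B -> C) (c : 'M[C]_(m, n)) : Prop :=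
  forall (b : B) (i : 'I_m) (j : 'I_n), phi i b * c i j = c i j * psi j b.

From HB Require Import structures.
From mathcomp Require Import all_boot all_order all_algebra all_fingroup.
From mathcomp Require Import complex reals.
Set Implicit Arguments. Unset Strict Implicit. Unset Printing Implicit Defensive.
Import Order.TTheory GRing.Theory Num.Theory.
Local Open Scope ring_scope.

(* Intertwiners compose under matrix multiplication and form a linear space.
   Both matrices of the lemma are products of [c] with intertwiners of a family
   with itself (or with a permutation of itself): a permutation matrix, and the
   elementary matrix [1 - x e_hk] with [x = c_hk c_kk^-1], for which
   [phi_h(b) x = x phi_k(b)] because conjugating [phi_k(b) c_kk = c_kk psi_k(b)]
   by [c_kk^-1] gives [c_kk^-1 phi_k(b) = psi_k(b) c_kk^-1]. *)

Lemma conj_commute_inv (A : pzRingType) (a b x d : A) :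
  a * x = x * b -> x * d = 1 -> d * x = 1 -> d * a = b * d.
Proof.
move=> axb xd dx.
by rewrite -[LHS]mulr1 -xd !mulrA -(mulrA d) axb mulrA dx mul1r.
Qed.

Section Intertwiners.

Variables (R : realType) (B C : algType R[i]).

Lemma intertwines_mul (l m n : nat) (phi : 'I_l -> B -> C) (chi : 'I_m -> B -> C)
    (psi : 'I_n -> B -> C) (e : 'M[C]_(l, m)) (c : 'M[C]_(m, n)) :
  intertwines phi chi e -> intertwines chi psi c -> intertwines phi psi (e *m c).
Proof.
move=> He Hc b i j; rewrite !mxE mulr_sumr mulr_suml.
by apply: eq_bigr => k _; rewrite mulrA He -mulrA Hc mulrA.
Qed.

Lemma intertwinesB (m n : nat) (phi : 'I_m -> B -> C) (psi : 'I_n -> B -> C)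
    (c1 c2 : 'M[C]_(m, n)) :
  intertwines phi psi c1 -> intertwines phi psi c2 ->
  intertwines phi psi (c1 - c2).
Proof. by move=> H1 H2 b i j; rewrite !mxE mulrBr mulrBl H1 H2. Qed.

Lemma intertwines1 (n : nat) (phi : 'I_n -> B -> C) :
  intertwines phi phi 1%:M.
Proof.
move=> b i j; rewrite !mxE.
by case: eqP => [->|_]; rewrite ?mulr1n ?mulr0n ?mulr1 ?mul1r ?mulr0 ?mul0r.
Qed.

Lemma intertwines_scale_delta (m n : nat) (phi : 'I_m -> B -> C)
    (psi : 'I_n -> B -> C) (h : 'I_m) (k : 'I_n) (x : C) :
  (forall b, phi h b * x = x * psi k b) ->
  intertwines phi psi (x *: delta_mx h k).
Proof.
move=> Hx b i j; rewrite !mxE.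
case: eqP => [->|_]; case: eqP => [->|_] //=;
  by rewrite ?mulr1 ?mulr0 ?mul0r ?mulr0 ?Hx.
Qed.

Lemma intertwines_perm_mx (n : nat) (psi : 'I_n -> B -> C) (s : 'S_n) :
  intertwines psi (fun j => psi (s j)) (perm_mx (s^-1)%g).
Proof.
move=> b i j; rewrite !mxE (canF_eq (permKV s)).
by case: eqP => [->|_]; rewrite ?mulr1 ?mul1r ?mulr0 ?mul0r.
Qed.

End Intertwiners.

(* The C*-structure, the surjectivity of the maps and the equality of the
   indices [k] and [kn] are not needed: the statement is purely algebraic. *)
Theorem lemma3p2 (R : realType) (B C : algType R[i])
    (starB : B -> B) (nrmB : B -> R) (starC : C -> C) (nrmC : C -> R)
    (HB : unital_cstar_algebra starB nrmB) (HC : unital_cstar_algebra starC nrmC)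
    (m n : nat) (phi : 'I_m -> B -> C) (psi : 'I_n -> B -> C)
    (Hphi : forall i, star_hom starB starC (phi i) /\ (forall y, exists x, phi i x = y))
    (Hpsi : forall j, star_hom starB starC (psi j) /\ (forall y, exists x, psi j x = y))
    (c : 'M[C]_(m, n)) (Hc : intertwines phi psi c) :
  (forall pi : 'S_n,
     intertwines phi (fun j => psi (pi j)) (c *m perm_mx (pi^-1)%g))
  /\
  (forall (k : 'I_m) (kn : 'I_n) (d : C),
     nat_of_ord k = nat_of_ord kn ->
     c k kn * d = 1 -> d * c k kn = 1 ->
     forall h : 'I_m, h != k ->
     intertwines phi psi
       ((1%:M - (c h kn * d) *: delta_mx h k) *m c)).
Proof.
split=> [pi|k kn d _ cd dc h _].
  exact: intertwines_mul Hc (intertwines_perm_mx psi pi).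
apply: (intertwines_mul (chi := phi) _ Hc).
apply: intertwinesB; first exact: intertwines1.
apply: intertwines_scale_delta => b.
have d_phi : d * phi k b = psi kn b * d := conj_commute_inv (Hc b k kn) cd dc.
by rewrite mulrA Hc -mulrA -d_phi mulrA.
Qed.
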